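(* Let $\mathcal{R}$ be the hyperfinite $II_1$ factor with normalized trace $\tau$, realized as the weak closure of the increasing union $\bigcup_{j\ge0} M_{2^j}(\mathbb{C})$, and let $P_n$ be the orthogonal projection of $L^2(\mathcal{R},\tau)$ onto $M_{2^n}(\mathbb{C})$. Let $(\mathcal{E},D(\mathcal{E}))$ be a Dirichlet form on $L^2(\mathcal{R},\tau)$ with $D(\mathcal{E})\supseteq\bigcup_{j\ge0}M_{2^j}(\mathbb{C})$, and set $\mathcal{E}_n(a)=\mathcal{E}(P_na)$. If $\lim_{n\to\infty}\mathcal{E}_n(a)=\mathcal{E}(a)$ for all $a\in D(\mathcal{E})$, then $\bigcup_{j\ge0}M_{2^j}(\mathbb{C})$ is a form core for $\mathcal{E}$, i.e. it is dense in $D(\mathcal{E})$ with respect to the norm $\|a\|_1=(\mathcal{E}(a)+\|a\|_2^2)^{1/2}$.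
   Context: $M_{2^n}(\mathbb{C})$ is embedded in $M_{2^{n+1}}(\mathbb{C})$ via $a\mapsto \mathrm{diag}(a,a)$. $L^2(\mathcal{R},\tau)$ is the completion of $\mathcal{R}$ in $\|a\|_2=\tau(a^*a)^{1/2}$; $J$ is the antilinear isometry extending $a\mapsto a^*$; $L^2_+$ is the closure of the positive elements; for real ($J$-invariant) $a$, $a\wedge1$ is the Hilbert projection of $a$ onto the $L^2$-closure of $\{b\in L^2_+: b\le 1\}$. A Dirichlet form is a closed, densely defined, nonnegative quadratic form on $L^2(\mathcal{R},\tau)$ that is real ($D(\mathcal{E})$ is $J$-invariant and $\mathcal{E}(Ja)=\mathcal{E}(a)$) and satisfies $\mathcal{E}(a\wedge1)\le\mathcal{E}(a)$ for real $a\in D(\mathcal{E})$. *)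

From HB Require Import structures.
From mathcomp Require Import all_boot all_order all_algebra.
From mathcomp Require Import complex.
From mathcomp Require Import reals.
Set Implicit Arguments. Unset Strict Implicit. Unset Printing Implicit Defensive.
Import Order.TTheory GRing.Theory Num.Theory.
Local Open Scope ring_scope.

Section Defs.
Variable R : realType.
Local Notation C := (R[i]).

Definition adjmx (k : nat) (a : 'M[C]_k) : 'M[C]_k := map_mx (@conjc R) a^T.

Definition psd (k : nat) (a : 'M[C]_k) : Prop := exists b : 'M[C]_k, a = adjmx b *m b.

(* the embedding M_{2^n} -> M_{2^{n+1}}, a |-> diag(a,a) *)
Lemma dbl_eq (n : nat) : (2 ^ n + 2 ^ n = 2 ^ n.+1)%N.
Proof. by rewrite expnS mul2n addnn. Qed.

Definition diag2 (n : nat) (a : 'M[C]_(2 ^ n)) : 'M[C]_(2 ^ n.+1) :=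
  castmx (dbl_eq n, dbl_eq n) (block_mx a 0 0 a).

(* normalized trace inner product <a,b> = tau(a^* b) on M_{2^n} *)
Definition trip (n : nat) (a b : 'M[C]_(2 ^ n)) : C :=
  \tr (adjmx a *m b) / (2 ^ n)%:R.

Variable H : lmodType C.
Variable ip : H -> H -> C.     (* inner product, linear in 2nd argument *)

Definition hnorm (x : H) : R := Num.sqrt (complex.Re (ip x x)).

Definition hilbert_space : Prop :=
  [/\ (forall x y z (c : C), ip x (c *: y + z) = c * ip x y + ip x z),
      (forall x y, ip y x = conjc (ip x y)),
      (forall x, complex.Im (ip x x) = 0 /\ 0 <= complex.Re (ip x x)),
      (forall x, complex.Re (ip x x) = 0 -> x = 0) &
      (forall u : nat -> H,
         (forall e : R, 0 < e -> exists N, forall k l, (N <= k)%N -> (N <= l)%N ->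
            hnorm (u k - u l) < e) ->
         exists x, forall e : R, 0 < e -> exists N, forall k, (N <= k)%N ->
            hnorm (u k - x) < e)].

(* iota : union_n M_{2^n}(C) -> H realizing H as L^2(R,tau):
   compatible with a |-> diag(a,a), linear, trace-isometric, dense range. *)
Variable iota : forall (n : nat), 'M[C]_(2 ^ n) -> H.
Arguments iota : clear implicits.

Definition is_L2_hyperfinite : Prop :=
  [/\ (forall n a, iota n.+1 (diag2 a) = iota n a),
      (forall n (c : C) a b, iota n (c *: a + b) = c *: iota n a + iota n b),
      (forall n a b, ip (iota n a) (iota n b) = trip a b) &
      (forall x (e : R), 0 < e -> exists n a, hnorm (x - iota n a) < e)].

Definition l2closure (S : H -> Prop) (x : H) : Prop :=
  forall e : R, 0 < e -> exists y, S y /\ hnorm (x - y) < e.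

Definition in_union (x : H) : Prop := exists n a, x = iota n a.

Definition is_J (J : H -> H) : Prop :=
  [/\ (forall (c : C) x y, J (c *: x + y) = conjc c *: J x + J y),
      (forall x, hnorm (J x) = hnorm x) &
      (forall n a, J (iota n a) = iota n (adjmx a))].

Definition L2pos : H -> Prop := l2closure (fun y => exists n a, psd a /\ y = iota n a).

Definition one : H := iota 0 1%:M.

Definition Cbox : H -> Prop := l2closure (fun b => L2pos b /\ L2pos (one - b)).

Definition is_proj (S : H -> Prop) (a c : H) : Prop :=
  S c /\ forall b, S b -> hnorm (a - c) <= hnorm (a - b).

Definition is_Pn (P : nat -> H -> H) : Prop :=
  forall n x, (exists m, P n x = iota n m) /\
              forall m, ip (iota n m) (x - P n x) = 0.

Definition dirichlet_form (J : H -> H) (D : H -> Prop) (E : H -> R) : Prop :=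
  (D 0 /\ forall (c : C) x y, D x -> D y -> D (c *: x + y)) /\
  [/\
      (forall x, l2closure D x),
      (exists q : H -> H -> C,
         [/\ forall (c : C) x y z, D x -> D y -> D z -> q x (c *: y + z) = c * q x y + q x z,
             forall x y, D x -> D y -> q y x = conjc (q x y) &
             forall x, D x -> ((E x)%:C)%C = q x x /\ 0 <= E x]),
      (forall (u : nat -> H) x, (forall k, D (u k)) ->
         (forall e : R, 0 < e -> exists N, forall k l, (N <= k)%N -> (N <= l)%N ->
            E (u k - u l) + hnorm (u k - u l) ^+ 2 < e) ->
         (forall e : R, 0 < e -> exists N, forall k, (N <= k)%N -> hnorm (u k - x) < e) ->
         D x /\ (forall e : R, 0 < e -> exists N, forall k, (N <= k)%N -> E (u k - x) < e)),
      (forall x, D x -> D (J x) /\ E (J x) = E x) &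
      (* Markov: E(a /\ 1) <= E(a) for real a in D *)
      (forall a c, D a -> J a = a -> is_proj Cbox a c -> D c /\ E c <= E a)].

End Defs.

(* The form inner product [ip1 = q + ip] turns [D] into a Hilbert space with
   norm ||.||_1.  Write [a = f + g], where [f] is the ||.||_1-projection of [a]
   onto the closure of the union of the ranges of [iota n] and [g] is
   [ip1]-orthogonal to that union.  Let [h] be the resolvent of [g], i.e.
   [ip1 x h = <x, g>] on [D].  The resolvent identity gives
   [|h - P_n h|_1^2 = (|P_n h|_1^2 - |h|_1^2) + 2 Re <h - P_n h, g>], and both
   terms vanish because [E (P_n h) -> E h] and [P_n h -> h] in L^2.  Hence
   [|g|_2^2 = ip1 g h = lim ip1 g (P_n h) = 0], so [a = f].  Projections and
   resolvents both come from minimising [|u|_1^2 - 2 Re phi u] (Riesz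
   representation); minimising sequences are Cauchy by the parallelogram law. *)

From HB Require Import structures.
From mathcomp Require Import all_boot all_order all_algebra.
From mathcomp Require Import complex.
From mathcomp Require Import reals.
From mathcomp Require Import boolp classical_sets.
From mathcomp Require Import ring lra.
Set Implicit Arguments. Unset Strict Implicit. Unset Printing Implicit Defensive.
Import Order.TTheory GRing.Theory Num.Theory.
Local Open Scope ring_scope.
Local Open Scope complex_scope.

Local Notation Re := complex.Re.
Local Notation Im := complex.Im.

Section ComplexParts.
Variable R : rcfType.
Implicit Types x y z : R[i].

Lemma ReM x y : Re (x * y) = Re x * Re y - Im x * Im y.
Proof. by case: x => a b; case: y => c d. Qed.

Lemma ImM x y : Im (x * y) = Re x * Im y + Im x * Re y.
Proof. by case: x => a b; case: y => c d. Qed.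

Lemma ReJ x : Re x^* = Re x.
Proof. by case: x. Qed.

Lemma ImJ x : Im x^* = - Im x.
Proof. by case: x. Qed.

Lemma complexP x y : Re x = Re y -> Im x = Im y -> x = y.
Proof. by case: x => a b; case: y => c d /= -> ->. Qed.

Lemma complex_sqr_le0 x : Re x ^+ 2 + Im x ^+ 2 <= 0 -> x = 0.
Proof.
move=> le0; have := sqr_ge0 (Re x); have := sqr_ge0 (Im x) => Im0 Re0.
by apply: complexP; apply/eqP; rewrite -sqrf_eq0 eq_le sqr_ge0 andbT; lra.
Qed.

Lemma complex_sqrD_le x y :
  Re (x + y) ^+ 2 + Im (x + y) ^+ 2 <=
  2 * (Re x ^+ 2 + Im x ^+ 2) + 2 * (Re y ^+ 2 + Im y ^+ 2).
Proof.
rewrite !raddfD /=; have := sqr_ge0 (Re x - Re y); have := sqr_ge0 (Im x - Im y).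
rewrite !expr2; lra.
Qed.

(* The perturbation [t = - z^* / (N + 1)] turns the hypothesis into the bound. *)
Lemma near_critical_sqr_le (N d : R) z : 0 <= N ->
  (forall t, - d <= 2 * Re (t * z) + (Re t ^+ 2 + Im t ^+ 2) * N) ->
  Re z ^+ 2 + Im z ^+ 2 <= d * (N + 1).
Proof.
move=> N0 hd; set r := (N + 1)^-1; set Z := Re z ^+ 2 + Im z ^+ 2.
have r_gt0 : 0 < r by rewrite invr_gt0; lra.
have rN : r * (N + 1) = 1 by rewrite mulVf //; lra.
have Z0 : 0 <= Z by rewrite addr_ge0 ?sqr_ge0.
have := hd (Complex (- r * Re z) (r * Im z)).
rewrite ReM /= -/r.
have -> : 2 * (- r * Re z * Re z - r * Im z * Im z) = - 2 * r * Z by rewrite /Z; ring.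
have -> : (- r * Re z) ^+ 2 + (r * Im z) ^+ 2 = r ^+ 2 * Z by rewrite /Z; ring.
have -> : r ^+ 2 * Z * N = r * Z - r ^+ 2 * Z.
  by rewrite -[in RHS](mulr1 (r * Z)) -rN; ring.
move=> h; have rZ : r * Z <= d by have := sqr_ge0 r; nra.
have -> : Z = (r * Z) * (N + 1) by rewrite mulrAC rN mul1r.
by rewrite ler_pM2r //; lra.
Qed.

End ComplexParts.

Section RealInequalities.
Variable R : realFieldType.
Implicit Types a b c r : R.

Lemma quadratic_ge0_discr a b c : 0 <= c ->
  (forall t, 0 <= a + 2 * t * b + t ^+ 2 * c) -> b ^+ 2 <= a * c.
Proof.
move=> c0 hq; have a0 : 0 <= a by have := hq 0; rewrite expr2; lra.
have [c_eq0|c_gt0] := eqVneq c 0.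
  rewrite c_eq0 mulr0; have [b_eq0|b_neq0] := eqVneq b 0; first by rewrite b_eq0 expr0n.
  have := hq (- (a + 1) / (2 * b)); rewrite c_eq0 mulr0 addr0.
  have -> : 2 * (- (a + 1) / (2 * b)) * b = - (a + 1) by field; rewrite b_neq0.
  lra.
have c_pos : 0 < c by rewrite lt_def c_gt0.
have := hq (- b / c).
have -> : a + 2 * (- b / c) * b + (- b / c) ^+ 2 * c = a - b ^+ 2 / c.
  by field; rewrite c_gt0.
by rewrite subr_ge0 ler_pdivrMr.
Qed.

Lemma ler_add_of_sqr_le_mul r a b : 0 <= a -> 0 <= b -> r ^+ 2 <= a * b ->
  2 * r <= a + b.
Proof. move=> a0 b0 h; have := sqr_ge0 (a - b); rewrite !expr2 in h *; nra. Qed.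

End RealInequalities.

Section Vanishing.
Variable R : realType.
Implicit Types (c : R) (u v : nat -> R).

Definition vanishing u := forall e, 0 < e -> exists N, forall n, (N <= n)%N -> u n < e.

Definition cauchy (d : nat -> nat -> R) :=
  forall e, 0 < e -> exists N, forall k l, (N <= k)%N -> (N <= l)%N -> d k l < e.

Lemma vanishingD u v : vanishing u -> vanishing v -> vanishing (fun n => u n + v n).
Proof.
move=> hu hv e e0; have e2 : 0 < e / 2 by rewrite divr_gt0.
have [N1 h1] := hu _ e2; have [N2 h2] := hv _ e2.
exists (maxn N1 N2) => n; rewrite geq_max => /andP[n1 n2].
by have := h1 n n1; have := h2 n n2; lra.
Qed.

Lemma vanishing_le u v : (forall n, u n <= v n) -> vanishing v -> vanishing u.
Proof.
move=> uv hv e /hv[N hN]; exists N => n /hN; exact: le_lt_trans.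
Qed.

Lemma vanishingZ c u : 0 <= c -> vanishing u -> vanishing (fun n => c * u n).
Proof.
move=> c0 hu e e0; have c1 : 0 < c + 1 by lra.
have [N hN] := hu _ (divr_gt0 e0 c1); exists N => n /hN un.
have [un0|un_pos] := lerP (u n) 0; first by have := mulr_ge0_le0 c0 un0; lra.
apply: (@le_lt_trans _ _ ((c + 1) * u n)); first by rewrite ler_pM2r //; lra.
by rewrite -ltr_pdivlMl // mulrC.
Qed.

Lemma vanishing_invS : vanishing (fun n => n.+1%:R^-1).
Proof.
move=> e e0; have [N hN] := ltr_add_invr e0; rewrite add0r in hN.
exists N => n Nn; apply: le_lt_trans hN.
by rewrite lef_pV2 ?posrE ?ltr0n // ler_nat ltnS.
Qed.

Lemma vanishing_sqr u : (forall n, 0 <= u n) -> vanishing u ->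
  vanishing (fun n => u n ^+ 2).
Proof.
move=> u0 hu e e0; have /hu[N hN] : 0 < Num.sqrt e by rewrite sqrtr_gt0.
exists N => n /hN un.
by rewrite -(sqr_sqrtr (ltW e0)) ltr_pXn2r ?nnegrE ?sqrtr_ge0.
Qed.

Lemma vanishing_of_sqr u v : (forall n, v n ^+ 2 <= u n) -> vanishing u -> vanishing v.
Proof.
move=> vu hu e e0; have [N hN] := hu _ (exprn_gt0 2 e0); exists N => n /hN un.
rewrite ltNge; apply/negP => ev; have : e ^+ 2 <= v n ^+ 2.
  by rewrite ler_pXn2r ?nnegrE //; lra.
by have := vu n; lra.
Qed.

Lemma le0_vanishing c u : (forall n, c <= u n) -> vanishing u -> c <= 0.
Proof.
move=> cu hu; apply/ler_addgt0Pr => e /hu[N /(_ N (leqnn N)) uN].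
by rewrite add0r; apply/ltW/(le_lt_trans (cu N)).
Qed.

End Vanishing.

Section HermitianForms.
Variable R : rcfType.
Local Notation C := R[i].
Variable V : lmodType C.

Definition subspace (P : V -> Prop) :=
  P 0 /\ forall (c : C) x y, P x -> P y -> P (c *: x + y).

Definition hermitian_on (P : V -> Prop) (f : V -> V -> C) :=
  (forall (c : C) x y z, P x -> P y -> P z -> f x (c *: y + z) = c * f x y + f x z) /\
  (forall x y, P x -> P y -> f y x = (f x y)^*).

Definition qform (f : V -> V -> C) x := Re (f x x).

Lemma subspaceT : subspace [set: V]%classic.
Proof. by []. Qed.

Variable P : V -> Prop.
Hypothesis hP : subspace P.

Lemma subspace0 : P 0. Proof. by case: hP. Qed.

Lemma subspaceD x y : P x -> P y -> P (x + y).
Proof. by move=> Px Py; have := hP.2 1 _ _ Px Py; rewrite scale1r. Qed.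

Lemma subspaceZ c x : P x -> P (c *: x).
Proof. by move=> Px; have := hP.2 c _ _ Px subspace0; rewrite addr0. Qed.

Lemma subspaceB x y : P x -> P y -> P (x - y).
Proof. by move=> Px Py; rewrite -scaleN1r; apply/subspaceD/subspaceZ. Qed.

Variable f : V -> V -> C.
Hypothesis hf : hermitian_on P f.

Lemma hermC x y : P x -> P y -> f y x = (f x y)^*.
Proof. exact: hf.2. Qed.

Lemma hermr0 x : P x -> f x 0 = 0.
Proof.
move=> Px; have := hf.1 1 _ _ _ Px subspace0 subspace0.
rewrite scale1r addr0 mul1r => e.
by have := subrr (f x 0); rewrite {1}e addrK.
Qed.

Lemma hermrD x y z : P x -> P y -> P z -> f x (y + z) = f x y + f x z.
Proof. by move=> Px Py Pz; have := hf.1 1 _ _ _ Px Py Pz; rewrite scale1r mul1r. Qed.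

Lemma hermrZ c x y : P x -> P y -> f x (c *: y) = c * f x y.
Proof.
by move=> Px Py; have := hf.1 c _ _ _ Px Py subspace0; rewrite !addr0 hermr0 ?addr0.
Qed.

Lemma hermrB x y z : P x -> P y -> P z -> f x (y - z) = f x y - f x z.
Proof.
move=> Px Py Pz; rewrite -scaleN1r addrC (hf.1 (-1) _ _ _ Px Pz Py).
by rewrite mulN1r addrC.
Qed.

Lemma hermlD x y z : P x -> P y -> P z -> f (x + y) z = f x z + f y z.
Proof.
move=> Px Py Pz; rewrite (hermC Pz (subspaceD Px Py)) hermrD // rmorphD.
by rewrite (hermC Pz Px) (hermC Pz Py).
Qed.

Lemma hermlZ c x y : P x -> P y -> f (c *: x) y = c^* * f x y.
Proof.
by move=> Px Py; rewrite (hermC Py (subspaceZ c Px)) hermrZ // rmorphM (hermC Py Px).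
Qed.

Lemma hermlB x y z : P x -> P y -> P z -> f (x - y) z = f x z - f y z.
Proof.
move=> Px Py Pz; rewrite (hermC Pz (subspaceB Px Py)) hermrB // rmorphB.
by rewrite (hermC Pz Px) (hermC Pz Py).
Qed.

Lemma qform_expand c x y : P x -> P y ->
  qform f (x + c *: y) =
  qform f x + 2 * Re (c * f x y) + (Re c ^+ 2 + Im c ^+ 2) * qform f y.
Proof.
move=> Px Py; have Pcy := subspaceZ c Py; have Pxcy := subspaceD Px Pcy.
rewrite /qform hermlD // !hermrD // !hermlZ // !hermrZ // (hermC Px Py).
rewrite !raddfD /= !ReM !ImM !ReJ !ImJ; ring.
Qed.

Lemma qformD x y : P x -> P y -> qform f (x + y) = qform f x + 2 * Re (f x y) + qform f y.
Proof.
by move=> Px Py; rewrite -[y]scale1r qform_expand // mul1r scale1r /=; ring.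
Qed.

Lemma qformB x y : P x -> P y -> qform f (x - y) = qform f x - 2 * Re (f x y) + qform f y.
Proof.
by move=> Px Py; rewrite -scaleN1r qform_expand // mulN1r raddfN /=; ring.
Qed.

Lemma qformN x : P x -> qform f (- x) = qform f x.
Proof.
move=> Px; rewrite -scaleN1r /qform (hermlZ _ Px (subspaceZ _ Px)) hermrZ //.
by rewrite rmorphN1 !mulN1r opprK.
Qed.

Lemma qformBC x y : P x -> P y -> qform f (x - y) = qform f (y - x).
Proof. by move=> Px Py; rewrite -opprB (qformN (subspaceB Py Px)). Qed.

Lemma qformZ_real (r : R) x : P x -> qform f (r%:C *: x) = r ^+ 2 * qform f x.
Proof.
move=> Px; rewrite /qform (hermlZ _ Px (subspaceZ _ Px)) hermrZ //.
by rewrite !ReM !ImM ReJ ImJ /=; ring.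
Qed.

Hypothesis qform_ge0 : forall x, P x -> 0 <= qform f x.

Lemma herm_CauchySchwarz x y : P x -> P y ->
  Re (f x y) ^+ 2 + Im (f x y) ^+ 2 <= qform f x * qform f y.
Proof.
move=> Px Py; set S := Re (f x y) ^+ 2 + Im (f x y) ^+ 2.
have S0 : 0 <= S by rewrite addr_ge0 ?sqr_ge0.
have disc : S ^+ 2 <= qform f x * (S * qform f y).
  apply: quadratic_ge0_discr; first by rewrite mulr_ge0 ?qform_ge0.
  move=> t; have := qform_ge0 (subspaceD Px (subspaceZ (t%:C * (f x y)^*) Py)).
  rewrite qform_expand // !ReM !ImM /= ReJ ImJ /S; move: (Re _) (Im _) => a b.
  by rewrite !expr2 => h; nra.
have [->|S_neq0] := eqVneq S 0; first by rewrite mulr_ge0 ?qform_ge0.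
have S_gt0 : 0 < S by rewrite lt_def S_neq0.
by rewrite -(ler_pM2l S_gt0) mulrCA -expr2.
Qed.

End HermitianForms.

Section FormDomain.
Variable R : realType.
Local Notation C := R[i].
Variables (H : lmodType C) (ip : H -> H -> C).
Hypothesis hip : hermitian_on [set: H]%classic ip.
Hypothesis ip_ge0 : forall x, 0 <= qform ip x.
Hypothesis ip_definite : forall x, qform ip x = 0 -> x = 0.
Hypothesis ip_complete : forall u : nat -> H,
  cauchy (fun k l => hnorm ip (u k - u l)) ->
  exists x, vanishing (fun k => hnorm ip (u k - x)).

Variables (D : H -> Prop) (E : H -> R) (q : H -> H -> C).
Hypotheses (hD : subspace D) (hq : hermitian_on D q).
Hypothesis qE : forall x, D x -> (E x)%:C = q x x /\ 0 <= E x.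
Hypothesis D_closed : forall (u : nat -> H) x, (forall k, D (u k)) ->
  cauchy (fun k l => E (u k - u l) + hnorm ip (u k - u l) ^+ 2) ->
  vanishing (fun k => hnorm ip (u k - x)) ->
  D x /\ vanishing (fun k => E (u k - x)).

Definition ip1 x y := q x y + ip x y.

Local Notation sqn2 := (qform ip).
Local Notation sqn1 := (qform ip1).

Lemma hnorm_sqr x : hnorm ip x ^+ 2 = sqn2 x.
Proof. by rewrite /hnorm sqr_sqrtr //; apply: ip_ge0. Qed.

Lemma hnorm_ltE x e : 0 < e -> (hnorm ip x < e) = (sqn2 x < e ^+ 2).
Proof.
by move=> e0; rewrite -ltr_sqrt ?exprn_gt0 // sqrtr_sqr gtr0_norm.
Qed.

Lemma ip1_herm : hermitian_on D ip1.
Proof.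
split=> [c x y z Dx Dy Dz | x y Dx Dy]; rewrite /ip1.
  by rewrite hq.1 // hip.1 //; ring.
by rewrite hq.2 // hip.2 // rmorphD.
Qed.

Lemma sqn1E x : D x -> sqn1 x = E x + sqn2 x.
Proof. by move=> Dx; rewrite /qform /ip1 raddfD -(qE Dx).1. Qed.

Lemma sqn2_le_sqn1 x : D x -> sqn2 x <= sqn1 x.
Proof. by move=> Dx; rewrite sqn1E // lerDr (qE Dx).2. Qed.

Lemma sqn1_ge0 x : D x -> 0 <= sqn1 x.
Proof. by move=> Dx; rewrite sqn1E // addr_ge0 // (qE Dx).2. Qed.

Lemma ip_CauchySchwarz x y :
  Re (ip x y) ^+ 2 + Im (ip x y) ^+ 2 <= sqn2 x * sqn2 y.
Proof. exact (herm_CauchySchwarz (subspaceT H) hip (fun x _ => ip_ge0 x) I I). Qed.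

Lemma ip1_CauchySchwarz x y : D x -> D y ->
  Re (ip1 x y) ^+ 2 + Im (ip1 x y) ^+ 2 <= sqn1 x * sqn1 y.
Proof. by move=> Dx Dy; have := herm_CauchySchwarz hD ip1_herm sqn1_ge0 Dx Dy. Qed.

Lemma sqn1_complete u : (forall k, D (u k)) ->
  cauchy (fun k l => sqn1 (u k - u l)) ->
  exists2 f, D f & vanishing (fun k => sqn1 (u k - f)).
Proof.
move=> Du u_cauchy; have Dsub k l : D (u k - u l) by apply: subspaceB.
have [f hf] : exists f, vanishing (fun k => hnorm ip (u k - f)).
  apply: ip_complete => e e0; have [N hN] := u_cauchy _ (exprn_gt0 2 e0).
  exists N => k l Nk Nl; rewrite hnorm_ltE //.
  exact: le_lt_trans (sqn2_le_sqn1 (Dsub k l)) (hN k l Nk Nl).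
have [Df hE] : D f /\ vanishing (fun k => E (u k - f)).
  apply: D_closed => // e /u_cauchy[N hN]; exists N => k l Nk Nl.
  by rewrite hnorm_sqr -sqn1E ?hN.
exists f => //.
apply: vanishing_le (vanishingD hE (vanishing_sqr (fun k => sqrtr_ge0 _) hf)) => k.
by rewrite hnorm_sqr sqn1E //; apply: subspaceB.
Qed.

Section Riesz.
Variables (S : H -> Prop) (phi : H -> C) (c : R).
Hypotheses (hS : subspace S) (SD : forall x, S x -> D x).
Hypothesis phi_antilinear : forall (t : C) x y, S x -> S y ->
  phi (t *: x + y) = t^* * phi x + phi y.
Hypothesis c_ge0 : 0 <= c.
Hypothesis phi_bounded : forall x, S x ->
  Re (phi x) ^+ 2 + Im (phi x) ^+ 2 <= c * sqn1 x.

Let phi0 : phi 0 = 0.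
Proof.
have := phi_antilinear 1 (subspace0 hS) (subspace0 hS).
rewrite scale1r addr0 rmorph1 mul1r => e.
by have := subrr (phi 0); rewrite {1}e addrK.
Qed.

Let phiD x y : S x -> S y -> phi (x + y) = phi x + phi y.
Proof. by move=> Sx Sy; have := phi_antilinear 1 Sx Sy; rewrite scale1r rmorph1 mul1r. Qed.

Let phiZ t x : S x -> phi (t *: x) = t^* * phi x.
Proof.
by move=> Sx; have := phi_antilinear t Sx (subspace0 hS); rewrite !addr0 phi0 addr0.
Qed.

Let energy u := sqn1 u - 2 * Re (phi u).

Let energy_ge u : S u -> - c <= energy u.
Proof.
move=> Su; suff : 2 * Re (phi u) <= c + sqn1 u by rewrite /energy; lra.
apply: ler_add_of_sqr_le_mul c_ge0 (sqn1_ge0 (SD Su)) _.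
by apply: le_trans (phi_bounded Su); rewrite lerDl sqr_ge0.
Qed.

Let m := inf [set energy u | u in S]%classic.

Let inf_le u : S u -> m <= energy u.
Proof.
move=> Su; apply: ge_inf; last by exists u.
by exists (- c) => _ [v Sv <-]; apply: energy_ge.
Qed.

Let inf_approx d : 0 < d -> exists u, S u /\ energy u < m + d.
Proof.
move=> d0; have : m < m + d by rewrite ltrDl.
have ne : ([set energy u | u in S] !=set0)%classic.
  by exists (energy 0), 0 => //; apply: subspace0.
by case/(inf_lt ne) => _ [u Su <-]; exists u.
Qed.

(* Parallelogram law, with the midpoint [(x + y) / 2] as competitor. *)
Let sqn1_sub_le x y : S x -> S y ->
  sqn1 (x - y) <= 2 * energy x + 2 * energy y - 4 * m.
Proof.
move=> Sx Sy; have Sxy := subspaceD hS Sx Sy; have [Dx Dy] := (SD Sx, SD Sy).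
have := inf_le (subspaceZ hS (2^-1)%:C Sxy).
rewrite /energy (qformZ_real hD ip1_herm _ (SD Sxy)) phiZ // phiD //.
rewrite ReM ReJ ImJ raddfD /=.
have := qformD hD ip1_herm Dx Dy; have := qformB hD ip1_herm Dx Dy.
lra.
Qed.

Let energy_perturb u v t : S u -> S v ->
  energy (u + t *: v) =
  energy u + 2 * Re (t * (ip1 u v - (phi v)^*)) + (Re t ^+ 2 + Im t ^+ 2) * sqn1 v.
Proof.
move=> Su Sv; rewrite /energy (qform_expand hD ip1_herm _ (SD Su) (SD Sv)).
rewrite (phiD Su (subspaceZ hS t Sv)) (phiZ t Sv) mulrBr !raddfD raddfN /= !ReM !ReJ !ImJ.
ring.
Qed.

Let near_min_sqr_le u v d : S u -> S v -> energy u < m + d ->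
  Re (ip1 u v - (phi v)^*) ^+ 2 + Im (ip1 u v - (phi v)^*) ^+ 2 <= d * (sqn1 v + 1).
Proof.
move=> Su Sv hu; apply: near_critical_sqr_le (sqn1_ge0 (SD Sv)) _ => t.
have := inf_le (subspaceD hS Su (subspaceZ hS t Sv)); rewrite energy_perturb //.
lra.
Qed.

Let minimizing u := forall k, S (u k) /\ energy (u k) < m + k.+1%:R^-1.

Let minimizing_cauchy u : minimizing u -> cauchy (fun k l => sqn1 (u k - u l)).
Proof.
move=> hu e e0; have /vanishing_invS[N hN] : 0 < e / 4 by rewrite divr_gt0.
exists N => k l Nk Nl; have := sqn1_sub_le (hu k).1 (hu l).1.
have := (hu k).2; have := (hu l).2; have := hN k Nk; have := hN l Nl.
move: (k.+1%:R^-1) (l.+1%:R^-1) => ik il; lra.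
Qed.

Let minimizing_limit_repr u f : minimizing u -> D f ->
  vanishing (fun k => sqn1 (u k - f)) -> forall v, S v -> ip1 v f = phi v.
Proof.
move=> hu Df f_lim v Sv; have Dv := SD Sv; have Du k := SD (hu k).1.
suff : ip1 f v = (phi v)^* by rewrite (hermC ip1_herm Df Dv) => ->; rewrite conjcK.
apply/eqP; rewrite -subr_eq0; apply/eqP/complex_sqr_le0.
apply: (le0_vanishing (u := fun k =>
  2 * ((sqn1 v + 1) * k.+1%:R^-1) + 2 * (sqn1 v * sqn1 (u k - f)))); last first.
  have N1_ge0 : 0 <= sqn1 v + 1 by rewrite addr_ge0 ?sqn1_ge0.
  apply: vanishingD.
    exact: vanishingZ (ler0n _ 2) (vanishingZ N1_ge0 (@vanishing_invS R)).
  exact: vanishingZ (ler0n _ 2) (vanishingZ (sqn1_ge0 Dv) f_lim).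
move=> k; have -> : ip1 f v - (phi v)^* = (ip1 (u k) v - (phi v)^*) + ip1 (f - u k) v.
  by rewrite (hermlB hD ip1_herm) //; ring.
apply: le_trans (complex_sqrD_le _ _) _; apply: lerD; rewrite ler_pM2l //.
  by rewrite mulrC; exact: near_min_sqr_le (hu k).1 Sv (hu k).2.
rewrite (qformBC hD ip1_herm (Du k) Df) mulrC.
exact: ip1_CauchySchwarz (subspaceB hD Df (Du k)) Dv.
Qed.

Lemma riesz_representation : exists2 f, D f &
  (forall v, S v -> ip1 v f = phi v) /\
  (forall e, 0 < e -> exists2 u, S u & sqn1 (u - f) < e).
Proof.
have inv_gt0 k : 0 < k.+1%:R^-1 :> R by rewrite invr_gt0.
have [u hu] := choice (fun k => inf_approx (inv_gt0 k)).
have [f Df f_lim] := sqn1_complete (fun k => SD (hu k).1) (minimizing_cauchy hu).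
exists f => //; split; first exact: minimizing_limit_repr hu Df f_lim.
by move=> e /f_lim[N hN]; exists (u N); [exact: (hu N).1 | exact: hN].
Qed.

End Riesz.

Lemma resolvent_exists k : exists2 h, D h & forall x, D x -> ip1 x h = ip x k.
Proof.
have [h Dh [h_repr _]] : exists2 h, D h &
    (forall x, D x -> ip1 x h = ip x k) /\
    (forall e, 0 < e -> exists2 u, D u & sqn1 (u - h) < e).
  apply: riesz_representation hD (fun x Dx => Dx) _ (ip_ge0 k) _.
  - by move=> t x y _ _; rewrite (hermlD (subspaceT H) hip) // (hermlZ (subspaceT H) hip).
  - move=> x Dx; apply: le_trans (ip_CauchySchwarz x k) _.
    by rewrite mulrC ler_wpM2l ?ip_ge0 ?sqn2_le_sqn1.
by exists h.
Qed.

Section Core.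
Variables (U : nat -> H -> Prop) (P : nat -> H -> H).
Hypothesis hU : forall n, subspace (U n).
Hypothesis U_succ : forall n x, U n x -> U n.+1 x.
Hypothesis UD : forall n x, U n x -> D x.
Hypothesis U_dense : forall x e, 0 < e -> exists n u, U n u /\ hnorm ip (x - u) < e.
Hypothesis P_range : forall n x, U n (P n x).
Hypothesis P_orth : forall n x u, U n u -> ip u (x - P n x) = 0.
Hypothesis E_P : forall a, D a -> vanishing (fun n => `|E (P n a) - E a|).

Let U_le n n' x : (n <= n')%N -> U n x -> U n' x.
Proof. by move/subnK <-; elim: (n' - n)%N => // k IH /IH /U_succ. Qed.

Let union x := exists n, U n x.

Let subspace_union : subspace union.
Proof.
split; first by exists 0%N; apply: subspace0.
move=> t x y [n Ux] [n' Uy]; exists (maxn n n').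
by apply: (hU _).2; [apply: U_le Ux | apply: U_le Uy]; rewrite ?leq_maxl ?leq_maxr.
Qed.

Lemma sqn2_sub_proj n x u : U n u ->
  sqn2 (x - u) = sqn2 (x - P n x) + sqn2 (P n x - u).
Proof.
move=> Uu; have -> : x - u = (x - P n x) + (P n x - u) by rewrite addrA subrK.
rewrite (qformD (subspaceT H) hip) // (hermC hip (I : [set: H]%classic _) I).
by rewrite P_orth ?conjc0 ?mulr0 ?addr0 //; apply: subspaceB.
Qed.

Lemma proj_cvg x : vanishing (fun n => sqn2 (x - P n x)).
Proof.
move=> e e0; have /(U_dense x)[N [u [Uu xu]]] : 0 < Num.sqrt e by rewrite sqrtr_gt0.
exists N => n Nn; move: xu; rewrite hnorm_ltE ?sqrtr_gt0 // sqr_sqrtr ?ltW //.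
by rewrite (sqn2_sub_proj x (U_le Nn Uu)); have := ip_ge0 (P n x - u); lra.
Qed.

Lemma sqn1_proj_cvg h : D h -> vanishing (fun n => `|sqn1 (P n h) - sqn1 h|).
Proof.
move=> Dh; apply: vanishing_le (vanishingD (E_P Dh) (proj_cvg h)) => n.
have := sqn2_sub_proj h (subspace0 (hU n)); rewrite !subr0 => pyth.
have DP := UD (P_range n h); rewrite !sqn1E //.
have -> : E (P n h) + sqn2 (P n h) - (E h + sqn2 h) =
          (E (P n h) - E h) - sqn2 (h - P n h) by rewrite pyth; ring.
by apply: le_trans (ler_normB _ _) _; rewrite (ger0_norm (ip_ge0 _)).
Qed.

Lemma resolvent_proj_cvg h k : D h -> (forall x, D x -> ip1 x h = ip x k) ->
  vanishing (fun n => sqn1 (h - P n h)).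
Proof.
move=> Dh hk; have DP n : D (P n h) := UD (P_range n h).
have Re_vanish : vanishing (fun n => Re (ip (h - P n h) k)).
  apply: vanishing_of_sqr (vanishingZ (ip_ge0 k) (proj_cvg h)) => n.
  rewrite mulrC; apply: le_trans (ip_CauchySchwarz _ _).
  by rewrite lerDl sqr_ge0.
apply: vanishing_le (vanishingD (sqn1_proj_cvg Dh) (vanishingZ (ler0n _ 2) Re_vanish)) => n.
have sqn1h : sqn1 h = Re (ip h k) by rewrite /qform hk.
rewrite (qformB hD ip1_herm Dh (DP n)) (hermC ip1_herm (DP n) Dh) hk // ReJ.
rewrite (hermlB (subspaceT H) hip) // raddfB /= -sqn1h.
by have := ler_norm (sqn1 (P n h) - sqn1 h); lra.
Qed.

Let union_proj a : D a -> exists2 f, D f &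
  (forall v, union v -> ip1 v (a - f) = 0) /\
  (forall e, 0 < e -> exists2 u, union u & sqn1 (u - f) < e).
Proof.
move=> Da; have [f Df [f_repr f_approx]] : exists2 f, D f &
    (forall v, union v -> ip1 v f = ip1 v a) /\
    (forall e, 0 < e -> exists2 u, union u & sqn1 (u - f) < e).
  apply: riesz_representation subspace_union _ _ (sqn1_ge0 Da) _.
  - by move=> x [n /UD].
  - move=> t x y [n /UD Dx] [n' /UD Dy].
    by rewrite (hermlD hD ip1_herm) ?(hermlZ hD ip1_herm) //; apply: subspaceZ.
  - by move=> x [n /UD Dx]; rewrite mulrC; exact: ip1_CauchySchwarz.
exists f => //; split => // v [n Uv]; have Dv := UD Uv.
by rewrite (hermrB ip1_herm) // f_repr ?subrr //; exists n.
Qed.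

Let union_orth_eq0 g : D g -> (forall v, union v -> ip1 v g = 0) -> g = 0.
Proof.
move=> Dg g_orth; have [h Dh h_repr] := resolvent_exists g.
apply: ip_definite; rewrite /qform -h_repr //.
suff -> : ip1 g h = 0 by []; apply: complex_sqr_le0.
apply: (le0_vanishing (u := fun n => sqn1 g * sqn1 (h - P n h))); last first.
  exact: vanishingZ (sqn1_ge0 Dg) (resolvent_proj_cvg Dh h_repr).
move=> n; have DP := UD (P_range n h).
have -> : ip1 g h = ip1 g (h - P n h).
  rewrite (hermrB ip1_herm) // (hermC ip1_herm DP Dg) g_orth ?conjc0 ?subr0 //.
  by exists n.
exact: ip1_CauchySchwarz Dg (subspaceB hD Dh DP).
Qed.

Lemma union_form_core a : D a -> forall e, 0 < e ->
  exists n x, U n x /\ E (a - x) + hnorm ip (a - x) ^+ 2 < e.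
Proof.
move=> Da e e0; have [f Df [f_orth f_approx]] := union_proj Da.
have [x [n Ux] small] := f_approx e e0.
have fa : f = a by apply/esym/subr0_eq/union_orth_eq0 => //; apply: subspaceB.
exists n, x; split => //; have Dx := UD Ux; have Dax := subspaceB hD Da Dx.
by rewrite hnorm_sqr -sqn1E // (qformBC hD ip1_herm Da Dx) -fa.
Qed.

End Core.

End FormDomain.

Section IotaRange.
Variables (R : realType) (H : lmodType R[i]) (ip : H -> H -> R[i]).
Variable iota : forall n : nat, 'M[R[i]]_(2 ^ n) -> H.
Arguments iota : clear implicits.
Hypothesis hiota : is_L2_hyperfinite ip iota.

Definition iota_range n x := exists m, x = iota n m.

Lemma subspace_iota_range n : subspace (iota_range n).
Proof.
have [_ iotaL _ _] := hiota.
have iota0 : iota n 0 = 0.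
  have := iotaL n 1 0 0; rewrite scale1r addr0 scale1r => e.
  by have := subrr (iota n 0); rewrite {1}e addrK.
split; first by exists 0.
by move=> c _ _ [a ->] [b ->]; exists (c *: a + b); rewrite iotaL.
Qed.

Lemma iota_range_succ n x : iota_range n x -> iota_range n.+1 x.
Proof. by have [iota_diag2 _ _ _] := hiota; case=> m ->; exists (diag2 m); rewrite iota_diag2. Qed.

Lemma iota_range_dense x e : 0 < e -> exists n u, iota_range n u /\ hnorm ip (x - u) < e.
Proof.
have [_ _ _ dense] := hiota; case/(dense x) => n [m small].
by exists n, (iota n m); split; first exists m.
Qed.

End IotaRange.

Theorem theorem2p5 (R : realType) (H : lmodType R[i]) (ip : H -> H -> R[i])
  (iota : forall n : nat, 'M[R[i]]_(2 ^ n) -> H) (J : H -> H)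
  (P : nat -> H -> H) (D : H -> Prop) (E : H -> R) :
  hilbert_space ip ->
  is_L2_hyperfinite ip iota ->
  is_J ip iota J ->
  is_Pn ip iota P ->
  dirichlet_form ip iota J D E ->
  (forall x, in_union iota x -> D x) ->
  (forall a, D a -> forall e : R, 0 < e -> exists N, forall n, (N <= n)%N ->
     `|E (P n a) - E a| < e) ->
  forall a, D a -> forall e : R, 0 < e ->
    exists x, in_union iota x /\ E (a - x) + hnorm ip (a - x) ^+ 2 < e ^+ 2.
Proof.
move=> [ipL ipH ipP ip_definite ip_complete] hiota _ hP
  [[D0 Dlin] [_ [q [qL qH qE]] D_closed _ _]] UD E_P a Da e e0.
have hip : hermitian_on [set: H]%classic ip.
  by split=> [c x y z _ _ _ | x y _ _]; [exact: ipL | exact: ipH].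
have P_orth n x u : iota_range iota n u -> ip u (x - P n x) = 0.
  by case=> m ->; exact: (hP n x).2.
have [n [_ [[m ->] small]]] := union_form_core hip (fun x => (ipP x).2) ip_definite
  ip_complete (conj D0 Dlin) (conj qL qH) qE D_closed (subspace_iota_range hiota)
  (iota_range_succ hiota) (fun n x Ux => UD x (ex_intro _ n Ux)) (iota_range_dense hiota)
  (fun n x => (hP n x).1) P_orth E_P Da (exprn_gt0 2 e0).
by exists (iota n m); split; first by exists n, m.
Qed.
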